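(* Let $f:\mathbb{R}^d\to\mathbb{R}$ be $L$-smooth, let $h$ be proper, closed and convex, and let $g:\mathbb{R}^d\to\mathbb{R}$ be $l$-Lipschitz continuous. Let $\lambda>0$ and suppose that for every $w$ the minimum of $x\mapsto\frac{1}{2\lambda}\|w-x\|_2^2+g(x)$ is attained at a chosen point $\zeta^\lambda(w)$. For $\gamma>0$ and $w,s\in\mathbb{R}^d$ let $\mathcal{P}_\gamma(w,s)=\frac1\gamma\left(w-\operatorname{prox}_{\gamma h}(w-\gamma s)\right)$, and let $\mathcal{G}_{\gamma}(w)=\{\mathcal{P}_\gamma(w,\nabla f(w)+v): v\in\partial g(w)\}$, where $\partial g$ is the (limiting) subdifferential of $g$. Let $w^k\in\mathbb{R}^d$, $\gamma>0$, and $\mathcal{G}^k_{\gamma,E}(w^k)=\mathcal{P}_\gamma\left(w^k,\nabla f(w^k)+\frac1\lambda(w^k-\zeta^\lambda(w^k))\right)$. If $\bar\gamma\ge\gamma$, then $$\operatorname{dist}\left(0,\mathcal{G}_{\bar\gamma}(\zeta^\lambda(w^k))\right)\le\|\mathcal{G}^k_{\gamma,E}(w^k)\|_2+2l\lambda\left(\frac{2}{\bar\gamma}+L\right).$$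
   Context: $\operatorname{prox}_{\gamma h}(v)=\arg\min_x\left(\frac{1}{2\gamma}\|v-x\|_2^2+h(x)\right)$; $\operatorname{dist}(0,S)=\inf_{u\in S}\|u\|_2$. A function is $L$-smooth if it is differentiable with $L$-Lipschitz gradient. *)

From HB Require Import structures.
From mathcomp Require Import all_boot all_order all_algebra.
From mathcomp Require Import all_classical all_reals all_analysis.
Set Implicit Arguments. Unset Strict Implicit. Unset Printing Implicit Defensive.
Import Order.TTheory GRing.Theory Num.Theory.
Import numFieldNormedType.Exports.
Local Open Scope classical_set_scope.
Local Open Scope ring_scope.

Section Defs.
Context {R : realType} {d : nat}.
Notation V := 'rV[R]_d.

Definition dotp (u v : V) : R := \sum_(i < d) u 0 i * v 0 i.
Definition enorm (u : V) : R := Num.sqrt (dotp u u).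

Definition grad (f : V -> R) (x : V) : V :=
  \row_(i < d) ('d f x (delta_mx 0 i : V)).

Definition L_smooth (L : R) (f : V -> R) : Prop :=
  (forall x, differentiable f x) /\
  (forall x y, enorm (grad f x - grad f y) <= L * enorm (x - y)).

Definition lipschitz_fun (l : R) (g : V -> R) : Prop :=
  forall x y, `|g x - g y| <= l * enorm (x - y).

Definition proper_fun (h : V -> \bar R) : Prop :=
  (forall x, h x != -oo%E) /\ (exists x, h x \is a fin_num).
Definition closed_fun (h : V -> \bar R) : Prop :=
  closed [set p : V * R | (h p.1 <= p.2%:E)%E].
Definition convex_fun (h : V -> \bar R) : Prop :=
  forall (x y : V) (t : R), 0 <= t <= 1 ->
    (h (t *: x + (1 - t) *: y)%R <= t%:E * h x + (1 - t)%:E * h y)%E.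

Definition is_prox (gamma : R) (h : V -> \bar R) (v p : V) : Prop :=
  forall x : V,
    ((1 / (2 * gamma) * enorm (v - p) ^+ 2)%:E + h p <=
     (1 / (2 * gamma) * enorm (v - x) ^+ 2)%:E + h x)%E.

(* prox_{gamma h}(v) = argmin_x (1/(2 gamma) ||v-x||^2 + h x)
   (unique for proper closed convex h and gamma > 0) *)
Definition prox (gamma : R) (h : V -> \bar R) (v : V) : V :=
  xget 0 (is_prox gamma h v).

Definition Pmap (h : V -> \bar R) (gamma : R) (w s : V) : V :=
  gamma^-1 *: (w - prox gamma h (w - gamma *: s)).

(* Frechet (regular) subdifferential:
   liminf_{y -> x, y <> x} (g y - g x - <v, y - x>) / ||y - x|| >= 0 *)
Definition frechet_subdiff (g : V -> R) (x : V) : set V :=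
  [set v | forall eps : R, 0 < eps ->
     \forall y \near x, g y - g x - dotp v (y - x) >= - eps * enorm (y - x)].

Definition limiting_subdiff (g : V -> R) (x : V) : set V :=
  [set v | exists (xs vs : nat -> V),
     [/\ xs @ \oo --> x, (fun k => g (xs k)) @ \oo --> g x,
         vs @ \oo --> v & forall k, frechet_subdiff g (xs k) (vs k)]].

Definition Gset (f : V -> R) (h : V -> \bar R) (g : V -> R) (gamma : R)
  (w : V) : set V :=
  [set Pmap h gamma w (grad f w + v) | v in limiting_subdiff g w].

(* dist(0, S) = inf_{u in S} ||u||_2  (= +oo for empty S) *)
Definition dist0 (S : set V) : \bar R :=
  ereal_inf [set (enorm u)%:E | u in S].

End Defs.

(* Write z = zeta w and v = (w - z) / lambda.  Comparing the minimality of z with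
   the point w and using that g is l-Lipschitz gives ||w - z|| <= 2 l lambda, and
   the first-order optimality of z shows that v is a Frechet, hence limiting,
   subgradient of g at z; so P_gammabar(z, grad f z + v) lies in G_gammabar(z).
   Since prox_{gammabar h} is nonexpansive, replacing (w, grad f w + v) by
   (z, grad f z + v) moves P_gammabar by at most
   (2 / gammabar) ||z - w|| + L ||z - w||, and ||P_gamma(w, s)|| is
   nonincreasing in gamma by monotonicity of the subdifferential of h.  Because
   prox is defined by choice, the existence of a minimizer is proved first: the
   prox objective is strongly convex, so minimizing sequences are Cauchy, and
   the closed epigraph of h makes their limit a minimizer. *)

From HB Require Import structures.
From mathcomp Require Import all_boot all_order all_algebra.
From mathcomp Require Import all_classical all_reals all_analysis.
From mathcomp Require Import ring lra.
Import Order.TTheory GRing.Theory Num.Theory.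
Import numFieldNormedType.Exports.
Local Open Scope classical_set_scope.
Local Open Scope ring_scope.

Section Euclidean.
Context {R : realType} {d : nat}.
Notation V := 'rV[R]_d.
Implicit Types (u v w x : V) (c : R).

Lemma dotpC u v : dotp u v = dotp v u.
Proof. by apply: eq_bigr => i _; rewrite mulrC. Qed.

Lemma dotpDl u v w : dotp (u + v) w = dotp u w + dotp v w.
Proof. by rewrite /dotp -big_split; apply: eq_bigr => i _; rewrite !mxE mulrDl. Qed.

Lemma dotpZl c u v : dotp (c *: u) v = c * dotp u v.
Proof. by rewrite /dotp mulr_sumr; apply: eq_bigr => i _; rewrite !mxE mulrA. Qed.

Lemma dotp0l v : dotp 0 v = 0.
Proof. by rewrite -(scale0r 0) dotpZl mul0r. Qed.

Lemma dotpNl u v : dotp (- u) v = - dotp u v.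
Proof. by rewrite -scaleN1r dotpZl mulN1r. Qed.

Lemma dotpBl u v w : dotp (u - v) w = dotp u w - dotp v w.
Proof. by rewrite dotpDl dotpNl. Qed.

Lemma dotpBr u v w : dotp w (u - v) = dotp w u - dotp w v.
Proof. by rewrite dotpC dotpBl !(dotpC w). Qed.

Lemma dotpNr u v : dotp u (- v) = - dotp u v.
Proof. by rewrite dotpC dotpNl dotpC. Qed.

Lemma dotpZr c u v : dotp u (c *: v) = c * dotp u v.
Proof. by rewrite dotpC dotpZl dotpC. Qed.

Lemma dotpp_ge0 u : 0 <= dotp u u.
Proof. by apply: sumr_ge0 => i _; rewrite -expr2 sqr_ge0. Qed.

Lemma dotpp_eq0 u : (dotp u u == 0) = (u == 0).
Proof.
apply/idP/eqP => [|->]; last by rewrite /dotp big1 // => i _; rewrite mxE mul0r.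
rewrite psumr_eq0 => [/allP u0|i _]; last by rewrite -expr2 sqr_ge0.
apply/rowP => i; rewrite mxE; apply/eqP.
by have := u0 i (mem_index_enum _); rewrite /= mulf_eq0 orbb.
Qed.

Lemma enorm_ge0 u : 0 <= enorm u.
Proof. exact: sqrtr_ge0. Qed.

Lemma enorm_sqr u : enorm u ^+ 2 = dotp u u.
Proof. by rewrite sqr_sqrtr // dotpp_ge0. Qed.

Lemma enorm_eq0 u : (enorm u == 0) = (u == 0).
Proof. by rewrite sqrtr_eq0 -dotpp_eq0 eq_le dotpp_ge0 andbT. Qed.

Lemma enorm0 : enorm (0 : V) = 0.
Proof. by apply/eqP; rewrite enorm_eq0. Qed.

Lemma enormZ c u : enorm (c *: u) = `|c| * enorm u.
Proof. by rewrite /enorm dotpZl dotpZr mulrA -expr2 sqrtrM ?sqr_ge0 // sqrtr_sqr. Qed.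

Lemma enormN u : enorm (- u) = enorm u.
Proof. by rewrite -scaleN1r enormZ normrN normr1 mul1r. Qed.

Lemma enorm_distC u v : enorm (u - v) = enorm (v - u).
Proof. by rewrite -enormN opprB. Qed.

Lemma enorm_subDr u v w : enorm ((u + w) - (v + w)) = enorm (u - v).
Proof. by rewrite opprD addrACA subrr addr0. Qed.

Lemma enorm_sqrB u v :
  enorm (u - v) ^+ 2 = enorm u ^+ 2 - 2 * dotp u v + enorm v ^+ 2.
Proof. by rewrite !enorm_sqr !dotpBl !dotpBr (dotpC v u); ring. Qed.

Lemma dotp_le_enorm u v : dotp u v <= enorm u * enorm v.
Proof.
have [->|u0] := eqVneq u 0; first by rewrite dotp0l enorm0 mul0r.
have [->|v0] := eqVneq v 0; first by rewrite dotpC dotp0l enorm0 mulr0.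
have uv_gt0 : 0 < enorm u * enorm v.
  by rewrite mulr_gt0 // lt_def enorm_eq0 ?u0 ?v0 enorm_ge0.
have := sqr_ge0 (enorm (enorm v *: u - enorm u *: v)).
rewrite enorm_sqrB dotpZl dotpZr !enormZ !ger0_norm ?enorm_ge0 // => sq_ge0.
by rewrite -(ler_pM2l uv_gt0); nra.
Qed.

Lemma enormD u v : enorm (u + v) <= enorm u + enorm v.
Proof.
rewrite -(ler_pXn2r (_ : 0 < 2)%N) ?nnegrE ?addr_ge0 ?enorm_ge0 //.
rewrite -[v]opprK enorm_sqrB enormN dotpNr mulrN opprK.
by have := dotp_le_enorm u v; nra.
Qed.

Lemma enormB u v : enorm (u - v) <= enorm u + enorm v.
Proof. by rewrite -(enormN v) enormD. Qed.

Lemma enorm_le_add_dist u v : enorm v <= enorm u + enorm (v - u).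
Proof. by rewrite -[v in leLHS](subrK u) addrC enormD. Qed.

Lemma normr_le_enorm u : `|u| <= enorm u.
Proof.
rewrite [leLHS]/Num.norm /= mx_normrE; apply: bigmax_le => [|[i j] _ /=]; first exact: enorm_ge0.
rewrite (ord1 i) -(ler_pXn2r (_ : 0 < 2)%N) ?nnegrE ?enorm_ge0 //.
rewrite enorm_sqr real_normK ?num_real // /dotp (bigD1 j) //= -expr2 lerDl.
by apply: sumr_ge0 => k _; rewrite -expr2 sqr_ge0.
Qed.

Lemma enorm_le_normr u : enorm u <= Num.sqrt (d%:R : R) * `|u|.
Proof.
rewrite -[`|u|]ger0_norm // -sqrtr_sqr -sqrtrM ?ler0n // ler_sqrt; last first.
  by rewrite mulr_ge0 ?ler0n ?sqr_ge0.
have -> : d%:R * `|u| ^+ 2 = \sum_(i < d) `|u| ^+ 2 by rewrite sumr_const card_ord mulr_natl.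
apply: ler_sum => i _.
rewrite -expr2 -real_normK ?num_real // (ler_pXn2r (_ : 0 < 2)%N) ?nnegrE //.
by rewrite [leRHS]/Num.norm /= mx_normrE; apply/bigmax_geP; right; exists (0, i).
Qed.

Lemma enorm_sqr_convex (t : R) u v w :
  enorm (u - (t *: v + (1 - t) *: w)) ^+ 2 =
  t * enorm (u - v) ^+ 2 + (1 - t) * enorm (u - w) ^+ 2
  - t * (1 - t) * enorm (v - w) ^+ 2.
Proof.
rewrite !enorm_sqr /dotp !mulr_sumr -big_split -sumrB /=.
by apply: eq_bigr => i _; rewrite !mxE; ring.
Qed.

Lemma near_enorm_lt x e : 0 < e -> \forall y \near x, enorm (y - x) < e.
Proof.
move=> e_gt0; have k_gt0 : 0 < Num.sqrt (d%:R : R) + 1 by rewrite ltr_wpDl ?sqrtr_ge0.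
near=> y; rewrite (le_lt_trans (enorm_le_normr _)) //.
rewrite (@le_lt_trans _ _ ((Num.sqrt (d%:R : R) + 1) * `|y - x|)) ?ler_wpM2r ?lerDl //.
rewrite mulrC -ltr_pdivlMr // distrC; near: y; apply: cvgr_dist_lt => //.
by rewrite divr_gt0.
Unshelve. all: by end_near. Qed.

Lemma nbhs_enorm_ball x (P : set V) :
  (\forall y \near x, P y) -> exists2 e, 0 < e & forall y, enorm (y - x) < e -> P y.
Proof.
move=> /nbhs_ballP [e e_gt0 xeP]; exists e => // y yx_lt; apply: xeP.
by rewrite -ball_normE /= distrC (le_lt_trans (normr_le_enorm _)).
Qed.

Lemma dist_enorm_le u v : `|enorm u - enorm v| <= enorm (u - v).
Proof.
rewrite ler_norml; apply/andP; split.
  by have := enormB u (u - v); rewrite opprB addrC subrK; lra.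
by have := enormB v (v - u); rewrite opprB addrC subrK enorm_distC; lra.
Qed.

Lemma enorm_continuous : continuous (@enorm R d).
Proof.
move=> x; apply/(@cvgrPdist_lt _ _ _ (nbhs x)) => e e_gt0.
near=> y; rewrite (le_lt_trans (dist_enorm_le _ _)) // enorm_distC.
by near: y; exact: near_enorm_lt.
Unshelve. all: by end_near. Qed.
End Euclidean.

Lemma le_of_weighted_sqr_le {R : realFieldType} {a b x y : R} :
  0 < a -> a <= b -> 0 <= x ->
  a * x ^+ 2 + b * y ^+ 2 <= (a + b) * (x * y) -> y <= x.
Proof.
move=> a_gt0 le_ab x_ge0 ineq; rewrite leNgt; apply/negP => lt_xy.
have : 0 < (y - x) * (b * y - a * x).
  rewrite mulr_gt0 ?subr_gt0 //; apply: lt_le_trans (ler_wpM2r _ le_ab).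
    by rewrite ltr_pM2l.
  exact: le_trans x_ge0 (ltW lt_xy).
suff -> : (y - x) * (b * y - a * x) = a * x ^+ 2 + b * y ^+ 2 - (a + b) * (x * y).
  by rewrite subr_gt0 ltNge ineq.
by ring.
Qed.

Section ProperClosedConvex.
Context {R : realType} {d : nat}.
Notation V := 'rV[R]_d.
Implicit Types (u v x y : V).
Variable h : V -> \bar R.
Hypotheses (h_proper : proper_fun h) (h_closed : closed_fun h)
  (h_convex : convex_fun h).

Lemma proper_fin_numE x : (h x \is a fin_num) = (h x != +oo%E).
Proof. by rewrite fin_numE h_proper.1. Qed.

Lemma convex_fun_fine {x y : V} {t : R} : 0 <= t <= 1 ->
  h x \is a fin_num -> h y \is a fin_num ->
  (h (t *: x + (1 - t) *: y) <= (t * fine (h x) + (1 - t) * fine (h y))%:E)%E.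
Proof.
by move=> t01 /fineK hx /fineK hy; have := @h_convex x y t t01; rewrite -hx -hy -!EFinM -EFinD.
Qed.

Lemma closed_fun_lt_near (a : R) x :
  (a%:E < h x)%E -> \forall y \near x, (a%:E < h y)%E.
Proof.
move=> ax; have : open (~` [set p : V * R | (h p.1 <= p.2%:E)%E]).
  by rewrite openC; exact: h_closed.
have xa : ~ (h x <= a%:E)%E by apply/negP; rewrite -ltNge.
rewrite openE => /(_ (x, a) xa).
move=> [[U W] /= [xU aW] UW_epiC]; apply: filterS xU => y yU.
have /= := UW_epiC (y, a) (conj yU (nbhs_singleton aW)).
by rewrite ltNge => /negP.
Qed.

(* Closedness gives h > h x0 - 1 on a ball around x0, and convexity along
   segments issued from x0 propagates this bound linearly. *)
Lemma proper_closed_convex_minorant :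
  exists x0 c k, 0 <= k /\ forall x, ((c - k * enorm (x - x0))%:E <= h x)%E.
Proof.
have [x0 hx0_fin] := h_proper.2; set h0 := fine (h x0).
have [e e_gt0 near_x0] : exists2 e, 0 < e &
    forall y, enorm (y - x0) < e -> ((h0 - 1)%:E < h y)%E.
  apply/nbhs_enorm_ball/closed_fun_lt_near.
  by rewrite -(fineK hx0_fin) lte_fin ltrBlDr ltrDl.
exists x0, (h0 - 1), (2 / e); split => [|x]; first by rewrite divr_ge0 // ltW.
have N_ge0 := enorm_ge0 (x - x0); set N := enorm (x - x0) in N_ge0 *.
have [N_lt|N_ge] := ltP N e.
  apply: le_trans (ltW (near_x0 _ N_lt)).
  by rewrite lee_fin lerBlDr lerDl mulr_ge0 // divr_ge0 // ltW.
have [hx_fin|] := boolP (h x \is a fin_num); last first.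
  by rewrite proper_fin_numE negbK => /eqP ->; rewrite leey.
have N_gt0 : 0 < N by apply: lt_le_trans N_ge.
pose t := e / (2 * N).
have t_gt0 : 0 < t by rewrite divr_gt0 // mulr_gt0.
have t01 : 0 <= t <= 1 by rewrite ltW //= ler_pdivrMr ?mulr_gt0 //; lra.
have near_y : enorm (t *: x + (1 - t) *: x0 - x0) < e.
  have -> : t *: x + (1 - t) *: x0 - x0 = t *: (x - x0).
    by apply/rowP => i; rewrite !mxE; ring.
  rewrite enormZ gtr0_norm // -/N /t invfM mulrA -[X in X < _]mulrA mulVf ?gt_eqF //.
  by rewrite mulr1 ltr_pdivrMr //; lra.
have := lt_le_trans (near_x0 _ near_y) (convex_fun_fine t01 hx_fin hx0_fin).
rewrite -(fineK hx_fin) !lte_fin lee_fin -/h0 => h0_lt.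
have tN : t * (2 / e * N) = 1 by rewrite /t; field; rewrite !gt_eqF.
nra.
Qed.

Definition prox_obj (gamma : R) v x : \bar R :=
  (1 / (2 * gamma) * enorm (v - x) ^+ 2)%:E + h x.

Lemma prox_obj_fin_num gamma v x :
  (prox_obj gamma v x \is a fin_num) = (h x \is a fin_num).
Proof. by rewrite fin_numD. Qed.

Lemma prox_obj_lt_fin_num {gamma : R} {v x : V} {r : R} :
  (prox_obj gamma v x < r%:E)%E -> h x \is a fin_num.
Proof.
rewrite proper_fin_numE; apply: contraTneq => hx.
by rewrite /prox_obj hx addey // ltNge leey.
Qed.

Lemma prox_obj_bounded_below gamma v :
  0 < gamma -> exists M : R, forall x, (M%:E <= prox_obj gamma v x)%E.
Proof.
move=> gamma_gt0; have [x0 [c [k [k_ge0 minor]]]] := proper_closed_convex_minorant.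
exists (c - k * enorm (v - x0) - k ^+ 2 * gamma / 2) => x.
apply: le_trans (leeD2l _ (minor x)); rewrite -EFinD lee_fin.
have tri : enorm (x - x0) <= enorm (v - x) + enorm (v - x0).
  by have := enormB (v - x0) (v - x); rewrite opprB (addrC (v - x0)) addrA subrK; lra.
have := ler_wpM2l k_ge0 tri; set T := enorm (v - x) => k_tri.
have : 0 <= (T - k * gamma) ^+ 2 / (2 * gamma).
  by rewrite divr_ge0 ?sqr_ge0 // mulr_ge0 // ltW.
have -> : (T - k * gamma) ^+ 2 / (2 * gamma) =
    1 / (2 * gamma) * T ^+ 2 - k * T + k ^+ 2 * gamma / 2.
  by field; rewrite gt_eqF.
lra.
Qed.

(* Strong convexity: compare the objective at the midpoint of a and b with m. *)
Lemma prox_obj_near_min_dist {gamma : R} {v : V} {m ea eb : R} {a b : V} :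
  0 < gamma ->
  (forall x, (m%:E <= prox_obj gamma v x)%E) ->
  (prox_obj gamma v a < (m + ea)%:E)%E -> (prox_obj gamma v b < (m + eb)%:E)%E ->
  enorm (a - b) ^+ 2 <= 4 * gamma * (ea + eb).
Proof.
move=> gamma_gt0 obj_ge oba obb.
have [ha_fin hb_fin] := (prox_obj_lt_fin_num oba, prox_obj_lt_fin_num obb).
have [ha hb] := (fineK ha_fin, fineK hb_fin).
have half01 : 0 <= (1 / 2 : R) <= 1 by apply/andP; split; lra.
have := le_trans (obj_ge _) (leeD2l _ (convex_fun_fine half01 ha_fin hb_fin)).
rewrite -EFinD lee_fin enorm_sqr_convex.
move: oba obb; rewrite /prox_obj -ha -hb -!EFinD !lte_fin.
set c := 1 / (2 * gamma); have c_gt0 : 0 < c by rewrite divr_gt0 // mulr_gt0.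
have c_gamma : c * (2 * gamma) = 1 by rewrite /c; field; rewrite gt_eqF.
nra.
Qed.

Lemma prox_obj_minimizing_cvg {gamma : R} {v : V} {m : R} {xs : nat -> V} :
  0 < gamma ->
  (forall x, (m%:E <= prox_obj gamma v x)%E) ->
  (forall n, (prox_obj gamma v (xs n) < (m + harmonic n)%:E)%E) ->
  cvg (xs n @[n --> \oo]).
Proof.
move=> gamma_gt0 obj_ge xs_lt; apply: cauchy_cvg; apply: cauchy_exP => e e_gt0.
have de_gt0 : 0 < e ^+ 2 / (8 * gamma) by rewrite divr_gt0 ?exprn_gt0 ?mulr_gt0.
have /cvgrPdist_lt /(_ _ de_gt0) [N _ N_le] := @cvg_harmonic R.
have small n : (N <= n)%N -> harmonic n < e ^+ 2 / (8 * gamma).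
  by move/N_le; rewrite /= sub0r normrN gtr0_norm ?harmonic_gt0.
exists (xs N), N => // n /= /small hn_lt; rewrite -ball_normE /=.
apply: le_lt_trans (normr_le_enorm _) _.
rewrite -(ltr_pXn2r (_ : 0 < 2)%N) ?nnegrE ?enorm_ge0 ?ltW //.
apply: le_lt_trans (prox_obj_near_min_dist gamma_gt0 obj_ge (xs_lt N) (xs_lt n)) _.
have hN_lt := small N (leqnn N).
have -> : e ^+ 2 = 4 * gamma * (e ^+ 2 / (8 * gamma) + e ^+ 2 / (8 * gamma)).
  by field; rewrite gt_eqF.
by rewrite ltr_pM2l ?mulr_gt0 // ltrD.
Qed.

Lemma prox_exists gamma v : 0 < gamma -> exists p, is_prox gamma h v p.
Proof.
move=> gamma_gt0; set obj := prox_obj gamma v.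
have [M M_le] := prox_obj_bounded_below gamma v gamma_gt0.
have [x1 hx1_fin] := h_proper.2.
have m_fin : ereal_inf (range obj) \is a fin_num.
  rewrite fin_numElt (lt_le_trans (ltNyr M)) ?le_ereal_inf_tmp //=; last first.
    by move=> _ [x _ <-]; exact: M_le.
  apply: le_lt_trans (ereal_inf_lbound (imageT _ x1)) _.
  by have /fin_numPlt/andP[] : obj x1 \is a fin_num by rewrite prox_obj_fin_num.
set m := fine (ereal_inf (range obj)).
have obj_ge x : (m%:E <= obj x)%E by rewrite fineK //; exact: ereal_inf_lbound.
have /choice [xs xs_lt] n : exists x, (obj x < (m + harmonic n)%:E)%E.
  have [_ [x _ <-]] := lb_ereal_inf_adherent (harmonic_gt0 n) m_fin.
  by rewrite EFinD fineK //; exists x.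
have xs_cvg := prox_obj_minimizing_cvg gamma_gt0 obj_ge xs_lt.
set p := lim (xs n @[n --> \oo]).
have q_cvg : (1 / (2 * gamma) * enorm (v - xs n) ^+ 2) @[n --> \oo] -->
    1 / (2 * gamma) * enorm (v - p) ^+ 2.
  have nrm_cvg : enorm (v - xs n) @[n --> \oo] --> enorm (v - p).
    exact: continuous_cvg (enorm_continuous _) (cvgB (cvg_cst v) xs_cvg).
  by apply: cvgMl_tmp; apply: cvgM.
set q := fun x => 1 / (2 * gamma) * enorm (v - x) ^+ 2 in q_cvg.
have hp_le : (h p <= (m - q p)%:E)%E.
  pose u n := (xs n, m + harmonic n - q (xs n)).
  have u_epi : \forall n \near \oo, (h (u n).1 <= (u n).2%:E)%E.
    apply: nearW => n /=; have xn_fin := prox_obj_lt_fin_num (xs_lt n).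
    move: (xs_lt n); rewrite /obj /prox_obj -(fineK xn_fin) -EFinD !lte_fin lee_fin.
    by rewrite lerBrDl => /ltW.
  have r_cvg : (m + harmonic n - q (xs n)) @[n --> \oo] --> m - q p.
    rewrite -[m in m - _]addr0.
    exact: cvgB (cvgD (cvg_cst m) cvg_harmonic) q_cvg.
  have u_cvg : u n @[n --> \oo] --> (p, m - q p) by exact: cvg_pair xs_cvg r_cvg.
  exact: closed_cvg _ h_closed u_epi _ u_cvg.
exists p => x; apply: le_trans (obj_ge x).
by apply: le_trans (leeD2l _ hp_le) _; rewrite -EFinD lee_fin addrC subrK.
Qed.

Lemma is_prox_prox gamma v : 0 < gamma -> is_prox gamma h v (prox gamma h v).
Proof. by move=> gamma_gt0; apply: xgetPex; exact: prox_exists. Qed.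

Lemma is_prox_fin_num {gamma : R} {v p : V} : is_prox gamma h v p -> h p \is a fin_num.
Proof.
move=> p_min; have [x1 hx1_fin] := h_proper.2.
rewrite proper_fin_numE; apply/eqP => hp_inf.
by have := p_min x1; rewrite hp_inf addey // -(fineK hx1_fin) -EFinD leye_eq.
Qed.

(* Compare p with the points of the segment [p, x] and let them tend to p. *)
Lemma is_prox_variational {gamma : R} {a p x : V} : 0 < gamma -> is_prox gamma h a p ->
  h x \is a fin_num -> dotp (a - p) (x - p) <= gamma * (fine (h x) - fine (h p)).
Proof.
move=> gamma_gt0 p_min hx_fin; have hp_fin := is_prox_fin_num p_min.
set D := dotp (a - p) (x - p); set N := enorm (x - p) ^+ 2.
set hx := fine (h x); set hp := fine (h p).
set c := 1 / (2 * gamma); have c_gt0 : 0 < c by rewrite divr_gt0 // mulr_gt0.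
have c_gamma : c * (2 * gamma) = 1 by rewrite /c; field; rewrite gt_eqF.
have seg_bound t : 0 < t <= 1 -> D <= t * N / 2 + gamma * (hx - hp).
  move=> /andP[t_gt0 t_le1]; have t01 : 0 <= t <= 1 by rewrite ltW.
  have := le_trans (p_min (t *: x + (1 - t) *: p)) (leeD2l _ (convex_fun_fine t01 hx_fin hp_fin)).
  rewrite -/hx -/hp -[h p]fineK // -/hp -!EFinD lee_fin.
  have -> : a - (t *: x + (1 - t) *: p) = (a - p) - t *: (x - p).
    by apply/rowP => i; rewrite !mxE; ring.
  rewrite (enorm_sqrB (a - p)) dotpZr enormZ exprMn real_normK ?num_real // -/D -/N -/c.
  move=> opt; have : 0 <= t * (c * (t * N - 2 * D) + (hx - hp)) by nra.
  rewrite pmulr_rge0 // => {}opt.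
  have two_gamma_ge0 : 0 <= 2 * gamma by rewrite mulr_ge0 // ltW.
  have := mulr_ge0 two_gamma_ge0 opt.
  rewrite mulrDr mulrA [_ * c]mulrC c_gamma mul1r; lra.
apply/ler_addgt0Pr => e e_gt0; have N_ge0 : 0 <= N by rewrite sqr_ge0.
pose t := e / (e + N + 1).
have t_gt0 : 0 < t by rewrite divr_gt0 //; lra.
have t_le1 : t <= 1 by rewrite ler_pdivrMr; lra.
have tN_le : t * N <= e by rewrite /t mulrAC ler_pdivrMr; nra.
have := seg_bound t; rewrite t_gt0 t_le1 => /(_ isT); lra.
Qed.

Lemma prox_nonexpansive gamma a b : 0 < gamma ->
  enorm (prox gamma h a - prox gamma h b) <= enorm (a - b).
Proof.
move=> gamma_gt0.
have [pa_min pb_min] := (is_prox_prox gamma a gamma_gt0, is_prox_prox gamma b gamma_gt0).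
set p := prox gamma h a in pa_min *; set q := prox gamma h b in pb_min *.
have ineq_p := is_prox_variational gamma_gt0 pa_min (is_prox_fin_num pb_min).
have ineq_q := is_prox_variational gamma_gt0 pb_min (is_prox_fin_num pa_min).
clearbody p q.
have sum_eq : dotp (a - p) (q - p) + dotp (b - q) (p - q) =
    enorm (p - q) ^+ 2 - dotp (a - b) (p - q).
  rewrite enorm_sqr /dotp -sumrB -big_split /=.
  by apply: eq_bigr => i _; rewrite !mxE; ring.
have := dotp_le_enorm (a - b) (p - q).
have := enorm_ge0 (p - q); have := enorm_ge0 (a - b); nra.
Qed.

Lemma prox_Pmap gamma w s : 0 < gamma ->
  prox gamma h (w - gamma *: s) = w - gamma *: Pmap h gamma w s.
Proof. by move=> gamma_gt0; rewrite /Pmap scalerA mulfV ?gt_eqF // scale1r subKr. Qed.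

Lemma fin_num_prox_Pmap gamma w s : 0 < gamma ->
  h (w - gamma *: Pmap h gamma w s) \is a fin_num.
Proof.
by move=> gamma_gt0; rewrite -prox_Pmap //; exact/is_prox_fin_num/is_prox_prox.
Qed.

Lemma Pmap_subgradient {gamma : R} (w s : V) {x : V} : 0 < gamma -> h x \is a fin_num ->
  let p := w - gamma *: Pmap h gamma w s in
  dotp (Pmap h gamma w s - s) (x - p) <= fine (h x) - fine (h p).
Proof.
move=> gamma_gt0 hx_fin /=.
have := is_prox_variational gamma_gt0 (is_prox_prox gamma (w - gamma *: s) gamma_gt0) hx_fin.
rewrite prox_Pmap //; set P := Pmap h gamma w s.
have -> : w - gamma *: s - (w - gamma *: P) = gamma *: (P - s).
  by apply/rowP => i; rewrite !mxE; ring.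
by rewrite dotpZl ler_pM2l.
Qed.

(* The two subgradient inequalities add up to
   <P - P', gamma P - gamma' P'> <= 0 for P = P_gamma(w, s), P' = P_gamma'(w, s). *)
Lemma enorm_Pmap_nonincreasing gamma gamma' w s : 0 < gamma -> gamma <= gamma' ->
  enorm (Pmap h gamma' w s) <= enorm (Pmap h gamma w s).
Proof.
move=> gamma_gt0 le_gamma; have gamma'_gt0 := lt_le_trans gamma_gt0 le_gamma.
have := Pmap_subgradient w s gamma_gt0 (fin_num_prox_Pmap gamma' w s gamma'_gt0).
have := Pmap_subgradient w s gamma'_gt0 (fin_num_prox_Pmap gamma w s gamma_gt0).
rewrite /=; set P := Pmap h gamma w s; set P' := Pmap h gamma' w s.
move=> ineq' ineq; clearbody P P'.
have sum_eq : dotp (P' - s) (w - gamma *: P - (w - gamma' *: P')) +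
    dotp (P - s) (w - gamma' *: P' - (w - gamma *: P)) =
    gamma * enorm P ^+ 2 + gamma' * enorm P' ^+ 2 - (gamma + gamma') * dotp P P'.
  rewrite !enorm_sqr /dotp !mulr_sumr -!big_split -sumrB /=.
  by apply: eq_bigr => i _; rewrite !mxE; ring.
apply: (le_of_weighted_sqr_le gamma_gt0 le_gamma (enorm_ge0 P)).
have := ler_wpM2l (addr_ge0 (ltW gamma_gt0) (ltW gamma'_gt0)) (dotp_le_enorm P P').
lra.
Qed.

Lemma enorm_Pmap_dist_le gamma w z s s' : 0 < gamma ->
  enorm (Pmap h gamma z s' - Pmap h gamma w s) <=
  2 / gamma * enorm (z - w) + enorm (s' - s).
Proof.
move=> gamma_gt0.
have := prox_nonexpansive gamma (z - gamma *: s') (w - gamma *: s) gamma_gt0.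
rewrite !prox_Pmap //; set P' := Pmap h gamma z s'; set P := Pmap h gamma w s.
clearbody P P'; move=> prox_le.
have eqP : gamma *: (P' - P) = (z - w) - (z - gamma *: P' - (w - gamma *: P)).
  by apply/rowP => i; rewrite !mxE; ring.
have eqs : z - gamma *: s' - (w - gamma *: s) = (z - w) - gamma *: (s' - s).
  by apply/rowP => i; rewrite !mxE; ring.
have := enormB (z - w) (z - gamma *: P' - (w - gamma *: P)).
rewrite -eqP enormZ gtr0_norm // => P_le.
have := enormB (z - w) (gamma *: (s' - s)); rewrite -eqs enormZ gtr0_norm // => s_le.
have two : gamma * (2 / gamma) = 2 by field; rewrite gt_eqF.
rewrite -(ler_pM2l gamma_gt0) mulrDr mulrA two; lra.
Qed.
End ProperClosedConvex.

Lemma frechet_subdiff_limiting {R : realType} {d : nat} (g : 'rV[R]_d -> R) x v :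
  frechet_subdiff g x v -> limiting_subdiff g x v.
Proof. by exists (fun=> x), (fun=> v); split => //; exact: cvg_cst. Qed.

Lemma dist0_le {R : realType} {d : nat} {S : set 'rV[R]_d} {u : 'rV[R]_d} :
  S u -> (dist0 S <= (enorm u)%:E)%E.
Proof. by move=> Su; apply: ereal_inf_lbound; exists u. Qed.

Section MoreauEnvelope.
Context {R : realType} {d : nat}.
Notation V := 'rV[R]_d.
Context {g : V -> R} {lambda : R} {zeta : V -> V}.
Hypotheses (lambda_gt0 : 0 < lambda)
  (zeta_min : forall v x : V,
     1 / (2 * lambda) * enorm (v - zeta v) ^+ 2 + g (zeta v) <=
     1 / (2 * lambda) * enorm (v - x) ^+ 2 + g x).

Lemma moreau_dist_le (l : R) w : 0 <= l -> lipschitz_fun l g ->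
  enorm (w - zeta w) <= 2 * l * lambda.
Proof.
move=> l_ge0 g_lip; have := zeta_min w w; rewrite subrr enorm0 expr0n mulr0 add0r.
have := g_lip w (zeta w); set E := enorm (w - zeta w).
rewrite ler_norml => /andP[_ lip_le] min_le.
have E_ge0 : 0 <= E by exact: enorm_ge0.
have : E ^+ 2 <= 2 * l * lambda * E.
  rewrite -(ler_pM2l (_ : 0 < 1 / (2 * lambda))) ?divr_gt0 ?mulr_gt0 //.
  have -> : 1 / (2 * lambda) * (2 * l * lambda * E) = l * E by field; rewrite gt_eqF.
  lra.
have [->|E_neq0] := eqVneq E 0; first by rewrite !mulr_ge0 // ltW.
by rewrite expr2 ler_pM2r // lt_def E_neq0.
Qed.

(* Minimality of zeta w against y, expanded around zeta w, leaves a quadratic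
   remainder of order ||y - zeta w||^2. *)
Lemma moreau_frechet_subgradient w :
  frechet_subdiff g (zeta w) (lambda^-1 *: (w - zeta w)).
Proof.
move=> eps eps_gt0; set z := zeta w; set c := 1 / (2 * lambda).
have c_gt0 : 0 < c by rewrite divr_gt0 // mulr_gt0.
have lambdaV : lambda^-1 = 2 * c by rewrite /c; field; rewrite gt_eqF.
near=> y; have r_lt : enorm (y - z) < eps / c.
  by near: y; apply: near_enorm_lt; rewrite divr_gt0.
have := zeta_min w y; rewrite -/z -/c.
have -> : w - y = (w - z) - (y - z) by rewrite opprB addrA subrK.
rewrite (enorm_sqrB (w - z)) dotpZl lambdaV.
set r := enorm (y - z) in r_lt *; have r_ge0 : 0 <= r by exact: enorm_ge0.
have : c * r ^+ 2 <= eps * r.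
  by rewrite expr2 mulrA ler_wpM2r // mulrC -ler_pdivlMr // ltW.
lra.
Unshelve. all: by end_near. Qed.
End MoreauEnvelope.

Theorem mainTheorem3 (R : realType) (d : nat)
  (f : 'rV[R]_d -> R) (h : 'rV[R]_d -> \bar R) (g : 'rV[R]_d -> R)
  (L l lambda : R) (zeta : 'rV[R]_d -> 'rV[R]_d)
  (w : 'rV[R]_d) (gamma gammabar : R) :
  0 <= L -> 0 <= l ->
  L_smooth L f ->
  proper_fun h -> closed_fun h -> convex_fun h ->
  lipschitz_fun l g ->
  0 < lambda ->
  (forall (v x : 'rV[R]_d),
     1 / (2 * lambda) * enorm (v - zeta v) ^+ 2 + g (zeta v) <=
     1 / (2 * lambda) * enorm (v - x) ^+ 2 + g x) ->
  0 < gamma -> gamma <= gammabar ->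
  (dist0 (Gset f h g gammabar (zeta w)) <=
   (enorm (Pmap h gamma w (grad f w + lambda^-1 *: (w - zeta w)))
    + 2 * l * lambda * (2 / gammabar + L))%:E)%E.
Proof.
move=> L_ge0 l_ge0 [_ grad_lip] h_proper h_closed h_convex g_lip lambda_gt0 zeta_min
  gamma_gt0 le_gamma.
have gammabar_gt0 := lt_le_trans gamma_gt0 le_gamma.
set z := zeta w; set v := lambda^-1 *: (w - z).
have v_subgrad : limiting_subdiff g z v.
  exact/frechet_subdiff_limiting/(moreau_frechet_subgradient lambda_gt0 zeta_min).
have P_mem : Gset f h g gammabar z (Pmap h gammabar z (grad f z + v)) by exists v.
apply: le_trans (dist0_le P_mem) _; rewrite lee_fin.
apply: le_trans (enorm_le_add_dist (Pmap h gammabar w (grad f w + v)) _) _.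
apply: lerD.
  exact: enorm_Pmap_nonincreasing.
apply: le_trans (enorm_Pmap_dist_le h h_proper h_closed h_convex gammabar w z _ _ gammabar_gt0) _.
rewrite enorm_subDr; apply: le_trans (lerD (lexx _) (grad_lip z w)) _.
rewrite (enorm_distC z w) -mulrDl [leRHS]mulrC.
apply: ler_wpM2l; first by rewrite addr_ge0 // divr_ge0 // ltW.
exact: moreau_dist_le lambda_gt0 zeta_min l w l_ge0 g_lip.
Qed.
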